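(* For every field $\mathbb{F}$, $n,d\ge1$ and every $n^d\times n^d$ matrix $M$ over $\mathbb{F}$, $\mathrm{PT\text{-}rank}(M)$ equals the minimum of $\sum_{\kappa\subseteq[d-1]}\mathrm{rank}(N_\kappa^{\top_\kappa})$ over all families $(N_\kappa)_{\kappa\subseteq[d-1]}$ of $n^d\times n^d$ matrices with $M=\sum_{\kappa\subseteq[d-1]}N_\kappa$.
   Context: Rows and columns are indexed by $[n]^d$. For $k\in[d]$, $M^{\top_k}_{(i_1,\dots,i_d),(j_1,\dots,j_d)}=M_{(\dots,i_{k-1},j_k,i_{k+1},\dots),(\dots,j_{k-1},i_k,j_{k+1},\dots)}$; $M^{\top_\kappa}$ composes these over $k\in\kappa$. $M$ is PT-basic if $\mathrm{rank}(M^{\top_\kappa})=1$ for some $\kappa\subseteq[d]$; $\mathrm{PT\text{-}rank}(M)$ is the least number of PT-basic matrices summing to $M$. *)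

From mathcomp Require Import all_boot all_order all_algebra.
Set Implicit Arguments. Unset Strict Implicit. Unset Printing Implicit Defensive.
Import GRing.Theory.
Local Open Scope ring_scope.

(* Multi-indices (i_1,...,i_d) in [n]^d, coordinates 0-based: 'I_d, values 'I_n. *)
Definition midx (n d : nat) : finType := {ffun 'I_d -> 'I_n}.

(* n^d x n^d matrices, rows/columns indexed by [n]^d via the enumeration of midx
   (#|midx n d| = n^d). *)
Definition ptmat (F : fieldType) (n d : nat) := 'M[F]_#|midx n d|.

Definition ptentry (F : fieldType) n d (M : ptmat F n d) (r c : midx n d) : F :=
  M (enum_rank r) (enum_rank c).

Definition mix n d (kappa : {set 'I_d}) (r c : midx n d) : midx n d :=
  [ffun k => if k \in kappa then c k else r k].

(* Partial transpose M^{T_kappa}: composition of the T_k for k in kappa,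
   i.e. swap coordinates k \in kappa between row and column index. *)
Definition ptrans (F : fieldType) n d (kappa : {set 'I_d}) (M : ptmat F n d)
  : ptmat F n d :=
  \matrix_(i, j) ptentry M (mix kappa (enum_val i) (enum_val j))
                           (mix kappa (enum_val j) (enum_val i)).

Definition PT_basic (F : fieldType) n d (M : ptmat F n d) : Prop :=
  exists kappa : {set 'I_d}, \rank (ptrans kappa M) = 1%N.

Definition PT_decomp (F : fieldType) n d (M : ptmat F n d) (r : nat) : Prop :=
  exists B : 'I_r -> ptmat F n d,
    (forall i, PT_basic (B i)) /\ M = \sum_(i < r) B i.

Definition is_PT_rank (F : fieldType) n d (M : ptmat F n d) (r : nat) : Prop :=
  PT_decomp M r /\ forall r', PT_decomp M r' -> (r <= r')%N.

(* [d-1] = {1,...,d-1} (1-based), i.e. the 0-based coordinates k with k < d-1. *)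
Definition lowcoords (d : nat) : {set 'I_d} := [set k : 'I_d | (k.+1 < d)%N].

(* Value of sum_{kappa \subseteq [d-1]} rank(N_kappa^{T_kappa}) for a family with
   M = sum_{kappa \subseteq [d-1]} N_kappa (entries N kappa for other kappa ignored). *)
Definition family_cost (F : fieldType) n d (M : ptmat F n d) (m : nat) : Prop :=
  exists N : {set 'I_d} -> ptmat F n d,
    M = \sum_(kappa : {set 'I_d} | kappa \subset lowcoords d) N kappa /\
    m = (\sum_(kappa : {set 'I_d} | kappa \subset lowcoords d)
            \rank (ptrans kappa (N kappa)))%N.

Definition is_min_family_cost (F : fieldType) n d (M : ptmat F n d) (m : nat)
  : Prop :=
  family_cost M m /\ forall m', family_cost M m' -> (m <= m')%N.

From HB Require Import structures.
From mathcomp Require Import all_boot all_order all_algebra.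
Set Implicit Arguments. Unset Strict Implicit. Unset Printing Implicit Defensive.
Import GRing.Theory.
Local Open Scope ring_scope.

(** If [N^{T_kappa}] has rank [s], it is a sum of [s] rank-one matrices, and
   transposing them back (partial transposition is an additive involution)
   writes [N] as a sum of [s] PT-basic matrices; so a family of cost [m]
   yields a PT-decomposition of length [m]. Conversely, a PT-basic [B] with
   [rank (B^{T_kappa}) = 1] also has [rank (B^{T_{~kappa}}) = 1], because
   [B^{T_{~kappa}}] is the transpose of [B^{T_kappa}]; and of [kappa] and its
   complement, one avoids the last coordinate, i.e. lies in [[d-1]]. Grouping
   the summands of a PT-decomposition of length [r] by such a [kappa] and using
   subadditivity of the rank gives a family of cost at most [r]. *)

Lemma least_witness_transfer (P Q : nat -> Prop) :
  (forall r, P r -> exists2 m, Q m & (m <= r)%N) -> (forall m, Q m -> P m) ->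
  forall r, (P r /\ forall r', P r' -> (r <= r')%N) <->
            (Q r /\ forall m, Q m -> (r <= m)%N).
Proof.
move=> PQ QP r; split=> [[Pr r_least] | [Qr r_least]].
  have [m Qm le_mr] := PQ r Pr.
  have eq_rm : r = m by apply/eqP; rewrite eqn_leq le_mr andbT; exact/r_least/QP.
  split=> [|m' /QP]; first by rewrite eq_rm.
  exact: r_least.
split=> [|r' /PQ[m Qm le_mr']]; first exact: QP.
exact: leq_trans (r_least m Qm) le_mr'.
Qed.

Lemma mulmx_sum_col_row (R : pzRingType) m n p (A : 'M[R]_(m, n)) (B : 'M_(n, p)) :
  A *m B = \sum_i col i A *m row i B.
Proof.
apply/matrixP=> a b; rewrite !mxE summxE.
by apply: eq_bigr => i _; rewrite !mxE big_ord1 !mxE.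
Qed.

Section RankOneDecomposition.
Variable F : fieldType.

Lemma row_free_row m n (A : 'M[F]_(m, n)) i : row_free A -> row_free (row i A).
Proof.
move=> freeA; rewrite -row_leq_rank rank_rV lt0b rowE.
have delta_neq0 : delta_mx 0 i != 0 :> 'rV[F]_m.
  by apply/eqP=> /matrixP/(_ 0 i)/eqP; rewrite !mxE !eqxx oner_eq0.
apply: contraNneq delta_neq0 => deltaA0.
by apply/eqP/(row_free_inj freeA); rewrite deltaA0 mul0mx.
Qed.

Lemma mxrank_col_mul_row m n p (A : 'M[F]_(m, n)) (B : 'M_(n, p)) i :
  row_full A -> row_free B -> \rank (col i A *m row i B) = 1%N.
Proof.
move=> fullA freeB; rewrite mxrankMfree ?row_free_row // -mxrank_tr tr_col.
by apply/eqP; apply: row_free_row; rewrite /row_free mxrank_tr.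
Qed.

Lemma rank_one_decomposition m n (A : 'M[F]_(m, n)) :
  exists2 G : 'I_(\rank A) -> 'M_(m, n),
    A = \sum_i G i & forall i, \rank (G i) = 1%N.
Proof.
exists (fun i => col i (col_base A) *m row i (row_base A)).
  by rewrite -mulmx_sum_col_row mulmx_base.
by move=> i; rewrite mxrank_col_mul_row ?col_base_full ?row_base_free.
Qed.

End RankOneDecomposition.

Section PartialTranspose.
Variables (F : fieldType) (n d : nat).
Implicit Types (kappa : {set 'I_d}) (A : ptmat F n d) (r c : midx n d).

Lemma ptransB kappa : zmod_morphism (@ptrans F n d kappa).
Proof. by move=> A B; apply/matrixP=> i j; rewrite !mxE /ptentry !mxE. Qed.

HB.instance Definition _ kappa :=
  GRing.isZmodMorphism.Build _ _ (@ptrans F n d kappa) (ptransB kappa).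

Lemma mix_mixK kappa r c : mix kappa (mix kappa r c) (mix kappa c r) = r.
Proof. by apply/ffunP=> k; rewrite !ffunE; case: (k \in kappa). Qed.

Lemma mix_setC kappa r c : mix (~: kappa) r c = mix kappa c r.
Proof. by apply/ffunP=> k; rewrite !ffunE in_setC; case: (k \in kappa). Qed.

Lemma ptransK kappa : involutive (@ptrans F n d kappa).
Proof.
move=> A; apply/matrixP=> i j.
by rewrite !mxE /ptentry !mxE !enum_rankK !mix_mixK /ptentry !enum_valK.
Qed.

Lemma ptrans_setC kappa A : ptrans (~: kappa) A = (ptrans kappa A)^T.
Proof. by apply/matrixP=> i j; rewrite !mxE /ptentry !mix_setC. Qed.

End PartialTranspose.

Section PTDecomposition.
Variables (F : fieldType) (n d : nat).
Implicit Types (kappa : {set 'I_d}) (A B : ptmat F n d).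

Lemma PT_decomp0 : PT_decomp (0 : ptmat F n d) 0.
Proof. by exists (fun=> 0); split=> [[]//|]; rewrite big_ord0. Qed.

Lemma PT_decompD A B a b :
  PT_decomp A a -> PT_decomp B b -> PT_decomp (A + B) (a + b).
Proof.
move=> [GA [basicA ->]] [GB [basicB ->]].
exists (fun i => match split i with inl j => GA j | inr k => GB k end); split.
  by move=> i; case: (split i).
rewrite big_split_ord; congr (_ + _); apply: eq_bigr => i _.
  by rewrite (unsplitK (inl _ : 'I_a + 'I_b)).
by rewrite (unsplitK (inr _ : 'I_a + 'I_b)).
Qed.

Lemma PT_decomp_sum (I : finType) (P : pred I) (G : I -> ptmat F n d) (c : I -> nat) :
  (forall i, P i -> PT_decomp (G i) (c i)) ->
  PT_decomp (\sum_(i | P i) G i) (\sum_(i | P i) c i).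
Proof.
move=> decompG; apply: (big_ind2 (@PT_decomp F n d)) => //.
  exact: PT_decomp0.
by move=> ? ? ? ?; apply: PT_decompD.
Qed.

Lemma PT_decomp_rank_ptrans kappa A : PT_decomp A (\rank (ptrans kappa A)).
Proof.
have [G defA rankG] := rank_one_decomposition (ptrans kappa A).
exists (fun i => ptrans kappa (G i)); split.
  by move=> i; exists kappa; rewrite ptransK.
by rewrite -(raddf_sum (ptrans kappa)) -defA [RHS]ptransK.
Qed.

Lemma PT_decomp_family_cost A m : family_cost A m -> PT_decomp A m.
Proof.
move=> [N [-> ->]]; apply: PT_decomp_sum => kappa _.
exact: PT_decomp_rank_ptrans.
Qed.

End PTDecomposition.

Section FamilyCost.
Variables (F : fieldType) (n d : nat).
Implicit Types (kappa : {set 'I_d}) (A B : ptmat F n d).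

Definition family_cost_le A m := exists2 m', family_cost A m' & (m' <= m)%N.

Lemma family_cost_le0 : family_cost_le 0 0.
Proof.
exists 0%N => //; exists (fun=> 0); split; first by rewrite big1.
by rewrite big1 // => kappa _; rewrite raddf0 mxrank0.
Qed.

Lemma family_cost_leD A B a b :
  family_cost_le A a -> family_cost_le B b -> family_cost_le (A + B) (a + b).
Proof.
move=> [_ [NA [-> ->]] le_a] [_ [NB [-> ->]] le_b].
exists (\sum_(kappa : {set 'I_d} | kappa \subset lowcoords d)
          \rank (ptrans kappa (NA kappa + NB kappa)%R))%N.
  by exists (fun kappa => NA kappa + NB kappa); rewrite big_split.
apply: leq_trans (leq_add le_a le_b); rewrite -big_split /=.
by apply: leq_sum => kappa _; rewrite raddfD mxrank_add.
Qed.

Lemma notin_lowcoords (k : 'I_d) : (k \notin lowcoords d) = (k.+1 == d).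
Proof. by rewrite inE -leqNgt eqn_leq ltn_ord. Qed.

Lemma lowcoords_or_setC kappa :
  (kappa \subset lowcoords d) || (~: kappa \subset lowcoords d).
Proof.
case: (boolP (kappa \subset lowcoords d)) => //= /subsetPn[k k_kappa].
rewrite notin_lowcoords => /eqP k_last.
apply/subsetP=> k'; rewrite in_setC; apply: contraR.
rewrite notin_lowcoords => /eqP k'_last.
by have -> : k' = k by apply/val_inj/succn_inj; rewrite k_last.
Qed.

Lemma PT_basic_lowcoords A :
  PT_basic A ->
  exists2 kappa : {set 'I_d}, kappa \subset lowcoords d & \rank (ptrans kappa A) = 1%N.
Proof.
move=> [kappa rank1]; case/orP: (lowcoords_or_setC kappa) => low.
  by exists kappa.
by exists (~: kappa); rewrite // ptrans_setC mxrank_tr.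
Qed.

Lemma family_cost_le_basic A : PT_basic A -> family_cost_le A 1.
Proof.
move=> /PT_basic_lowcoords[kappa low rank1].
exists 1%N => //; exists (fun kappa' => if kappa' == kappa then A else 0); split.
  by rewrite (bigD1 kappa) //= eqxx big1 ?addr0 // => k /andP[_ /negbTE->].
rewrite (bigD1 kappa) //= eqxx rank1 big1 // => k /andP[_ /negbTE->].
by rewrite raddf0 mxrank0.
Qed.

Lemma family_cost_le_PT_decomp A r : PT_decomp A r -> family_cost_le A r.
Proof.
move=> [G [basicG ->]].
have sum1_r : (\sum_(i < r) 1)%N = r by rewrite sum1_card card_ord.
rewrite -[X in family_cost_le _ X]sum1_r.
apply: (big_ind2 family_cost_le) => [||i _].
- exact: family_cost_le0.
- by move=> ? ? ? ?; apply: family_cost_leD.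
- exact: family_cost_le_basic.
Qed.

End FamilyCost.

Theorem lemma3p5 (F : fieldType) (n d : nat) (hn : (0 < n)%N) (hd : (0 < d)%N)
  (M : ptmat F n d) (r : nat) :
  is_PT_rank M r <-> is_min_family_cost M r.
Proof.
exact: least_witness_transfer (@family_cost_le_PT_decomp F n d M)
                              (@PT_decomp_family_cost F n d M) r.
Qed.
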